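(* Let $a<0$, $b<0$, $c>0$, $d<0$ with $a+bd>0$, consider $$Z_0=\begin{cases}X=(a,0,b(y+x^2)) & z\ge0,\\ Y=(c,d,x)& z\le0,\end{cases}$$ and let $\Sigma^{c+}=\{(x,y,0)\,:\,b(y+x^2)>0,\ x>0\}=\{(x,y,0)\,:\,x>0,\ y<-x^2\}$. Let $\varphi$ be the first return map $$\varphi(x,y)=\left(\frac{ax-\sqrt{-3a^2(x^2+4y)}}{2a},\ y+\frac{d\big(ax-\sqrt{-3a^2(x^2+4y)}\big)}{ac}\right).$$ Then $$\varphi(\Sigma^{c+})\subset\Big\{(x,y,0)\in\Sigma\,:\,-\tfrac{x^2}{3}+2\tfrac{d}{c}x<y<-\tfrac{x^2}{4}+2\tfrac{d}{c}x,\ x>0\Big\}.$$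
   Context: $\Sigma=\{z=0\}$, points identified with $(x,y)$ or $(x,y,0)$. The first return map $\varphi$ sends a point $p$ of $\Sigma$ to the point obtained by following the trajectory of $X$ from $p$ until it returns to $\Sigma$, and then following the trajectory of $Y$ from there until it returns to $\Sigma$; the displayed formula is its explicit expression. *)

From Stdlib Require Import Reals Lra.
Open Scope R_scope.

(* Points of Sigma = {z = 0} are identified with pairs (x, y). *)

Definition Sigma_cplus (b : R) (p : R * R) : Prop :=
  b * (snd p + (fst p)^2) > 0 /\ fst p > 0.

Definition phi (a c d : R) (p : R * R) : R * R :=
  let x := fst p in let y := snd p in
  let w := a * x - sqrt (- 3 * a^2 * (x^2 + 4 * y)) in
  (w / (2 * a), y + d * w / (a * c)).

Definition target_region (c d : R) (q : R * R) : Prop :=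
  - (fst q)^2 / 3 + 2 * (d / c) * fst q < snd q /\
  snd q < - (fst q)^2 / 4 + 2 * (d / c) * fst q /\
  fst q > 0.

From Stdlib Require Import Reals Lra.
Open Scope R_scope.

(* With t = sqrt(-3(x^2 + 4y)) the map reads phi(x, y) = (X, y + 2(d/c) X)
   where X = (x + t)/2, so the claim is -X^2/3 < y < -X^2/4.  Since
   y = -(t^2 + 3x^2)/12, the left inequality is x < t and the right one is
   (t - 3x)^2 > 0; both follow from t^2 > 9x^2, i.e. from y < -x^2. *)

Lemma sqrt_sqr_mult_neg (a u : R) : a < 0 -> sqrt (a ^ 2 * u) = - a * sqrt u.
Proof.
  intros ha.
  rewrite sqrt_mult_alt by nra.
  replace (a ^ 2) with ((- a) ^ 2) by ring.
  now rewrite sqrt_pow2 by lra.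
Qed.

Lemma Sigma_cplusE (b x y : R) :
  b < 0 -> Sigma_cplus b (x, y) -> 0 < x /\ y + x ^ 2 < 0.
Proof.
  intros hb [hpos hx]; cbn [fst snd] in *.
  split; [lra|].
  destruct (Rlt_or_le (y + x ^ 2) 0) as [h|h]; [exact h|nra].
Qed.

Lemma phi_closed_form (a c d x y : R) : a < 0 -> c <> 0 ->
  let X := (x + sqrt (- 3 * (x ^ 2 + 4 * y))) / 2 in
  phi a c d (x, y) = (X, y + 2 * (d / c) * X).
Proof.
  intros ha hc X; unfold phi, X; cbn [fst snd].
  replace (- 3 * a ^ 2 * (x ^ 2 + 4 * y))
    with (a ^ 2 * (- 3 * (x ^ 2 + 4 * y))) by ring.
  rewrite sqrt_sqr_mult_neg by exact ha.
  f_equal; field; lra.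
Qed.

Lemma return_abscissa_band (x y : R) : 0 < x -> y + x ^ 2 < 0 ->
  let X := (x + sqrt (- 3 * (x ^ 2 + 4 * y))) / 2 in
  - X ^ 2 / 3 < y /\ y < - X ^ 2 / 4 /\ 0 < X.
Proof.
  intros hx hy X; unfold X.
  set (t := sqrt (- 3 * (x ^ 2 + 4 * y))).
  assert (ht0 : 0 <= t) by apply sqrt_pos.
  assert (htt : t * t = - 3 * (x ^ 2 + 4 * y)) by (apply sqrt_sqrt; nra).
  assert (ht3 : 3 * x < t) by nra.
  assert (hgap : 0 < (t - 3 * x) * (t - 3 * x)) by nra.
  split; [|split]; nra.
Qed.

Theorem mainTheorem5 (a b c d : R)
  (ha : a < 0) (hb : b < 0) (hc : c > 0) (hd : d < 0) (habd : a + b * d > 0) :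
  forall p : R * R, Sigma_cplus b p -> target_region c d (phi a c d p).
Proof.
  intros [x y] hp.
  destruct (Sigma_cplusE b x y hb hp) as [hx hy].
  rewrite phi_closed_form by lra.
  destruct (return_abscissa_band x y hx hy) as (hlo & hhi & hX).
  unfold target_region; cbn [fst snd].
  split; [|split]; lra.
Qed.
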